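(* Let $\mathcal C$ be a subcategory of the category of groups, let $\mathcal H$ be a class of maps for $\mathcal C$, and let $\Gamma$ be an $\mathcal H$-invariant subgroup function on $\mathcal C$, with stabilization $\Gamma_S$. Then: (1) for each $A\in\mathcal C$, $\Gamma(A)$ is a normal subgroup of $\Gamma_S(A)$; (2) every $f:A\to B$ in $\mathcal H$ induces a monomorphism $A/\Gamma_S(A)\hookrightarrow B/\Gamma_S(B)$; (3) if $\widetilde\Gamma$ is any $\mathcal H$-invariant subgroup function on $\mathcal C$ such that $\Gamma(A)\subset\widetilde\Gamma(A)$ for all $A\in\mathcal C$ and every $f:A\to B$ in $\mathcal H$ induces a monomorphism $A/\widetilde\Gamma(A)\hookrightarrow B/\widetilde\Gamma(B)$, then $\Gamma_S(A)\subset\widetilde\Gamma(A)$ for all $A\in\mathcal C$.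
   Context: A subgroup function on $\mathcal C$ assigns to each $A\in\mathcal C$ a normal subgroup $\Gamma(A)\trianglelefteq A$. A class of maps for $\mathcal C$ is a set $\mathcal H$ of morphisms of $\mathcal C$ that contains all isomorphisms, is closed under composition, and is closed under nudge-outs: whenever $f:A\to B$ and $f':A\to B'$ lie in $\mathcal H$, there exist a group $C$ and $g:B\to C$, $g':B'\to C$ in $\mathcal H$ with $g\circ f=g'\circ f'$. $\Gamma$ is $\mathcal H$-invariant if $f(\Gamma(A))\subset\Gamma(B)$ for every $f:A\to B$ in $\mathcal H$. The stabilization of $\Gamma$ with respect to $\mathcal H$ is $\Gamma_S(A)=\{a\in A\mid \exists f:A\to B,\ f\in\mathcal H,\ f(a)\in\Gamma(B)\}$. *)

Set Implicit Arguments.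
Unset Strict Implicit.

Record Grp := {
  gcar :> Type;
  gmul : gcar -> gcar -> gcar;
  ginv : gcar -> gcar;
  gone : gcar;
  gmulA : forall x y z, gmul x (gmul y z) = gmul (gmul x y) z;
  gmul1 : forall x, gmul gone x = x;
  gmulV : forall x, gmul (ginv x) x = gone
}.

Arguments gmul {g}. Arguments ginv {g}. Arguments gone {g}.

Definition is_subgroup (G : Grp) (S : G -> Prop) : Prop :=
  S gone /\ (forall x y, S x -> S y -> S (gmul x y)) /\ (forall x, S x -> S (ginv x)).

Definition is_normal_subgroup (G : Grp) (S : G -> Prop) : Prop :=
  is_subgroup S /\ (forall g x, S x -> S (gmul (gmul (ginv g) x) g)).

Definition normal_subgroup_of (G : Grp) (N H : G -> Prop) : Prop :=
  is_subgroup H /\ is_subgroup N /\ (forall x, N x -> H x) /\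
  (forall h x, H h -> N x -> N (gmul (gmul (ginv h) x) h)).

Definition is_hom (A B : Grp) (f : A -> B) : Prop :=
  forall x y, f (gmul x y) = gmul (f x) (f y).

Definition is_subcategory (Ob : Grp -> Prop)
  (Mor : forall A B : Grp, (A -> B) -> Prop) : Prop :=
  (forall A B f, Mor A B f -> Ob A /\ Ob B /\ is_hom f) /\
  (forall A, Ob A -> Mor A A (fun x => x)) /\
  (forall A B C f g, Mor A B f -> Mor B C g -> Mor A C (fun x => g (f x))).
Arguments is_hom {A B}.

Definition is_iso (Mor : forall A B : Grp, (A -> B) -> Prop)
  (A B : Grp) (f : A -> B) : Prop :=
  Mor A B f /\ exists g : B -> A, Mor B A g /\
     (forall a, g (f a) = a) /\ (forall b, f (g b) = b).

Arguments is_iso Mor A B f : clear implicits.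

Definition class_of_maps (Ob : Grp -> Prop)
  (Mor : forall A B : Grp, (A -> B) -> Prop)
  (H : forall A B : Grp, (A -> B) -> Prop) : Prop :=
  (forall A B f, H A B f -> Mor A B f) /\
  (forall A B f, is_iso Mor A B f -> H A B f) /\
  (forall A B C f g, H A B f -> H B C g -> H A C (fun x => g (f x))) /\
  (forall (A B B' : Grp) (f : A -> B) (f' : A -> B'), H A B f -> H A B' f' ->
     exists C : Grp, exists (g : B -> C) (g' : B' -> C),
       Ob C /\ H B C g /\ H B' C g' /\ forall a, g (f a) = g' (f' a)).

Definition subgroup_function (Ob : Grp -> Prop)
  (Gam : forall A : Grp, A -> Prop) : Prop :=
  forall A, Ob A -> is_normal_subgroup (Gam A).

Definition H_invariant (H : forall A B : Grp, (A -> B) -> Prop)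
  (Gam : forall A : Grp, A -> Prop) : Prop :=
  forall A B f, H A B f -> forall a, Gam A a -> Gam B (f a).

Definition stabilization (H : forall A B : Grp, (A -> B) -> Prop)
  (Gam : forall A : Grp, A -> Prop) (A : Grp) (a : A) : Prop :=
  exists (B : Grp) (f : A -> B), H A B f /\ Gam B (f a).

(* f : A -> B (a homomorphism) induces a monomorphism A/N -> B/M:
   the induced map aN |-> f(a)M is well defined (f(N) ⊆ M) and has trivial
   kernel (f(a) ∈ M implies a ∈ N). *)
Definition induces_mono (A B : Grp) (f : A -> B) (N : A -> Prop) (M : B -> Prop) : Prop :=
  (forall a, N a -> M (f a)) /\ (forall a, M (f a) -> N a).
Arguments stabilization H Gam A a : clear implicits.


(* The stabilization Γ_S(A) collects the elements killed by Γ after some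
   H-map.  Nudge-outs make it a subgroup: two witnesses f, f' for a and b are
   pushed to a common target C where g ∘ f = g' ∘ f', and H-invariance of Γ
   puts the images of a and b, hence of a * b, in Γ(C).  The same nudge-out
   shows that Γ_S is H-invariant, while composing witnesses shows that
   f(a) ∈ Γ_S(B) forces a ∈ Γ_S(A).  Finally, if a ∈ Γ_S(A) is witnessed by
   f : A -> B, then f(a) ∈ Γ(B) ⊆ Γ~(B), and injectivity of the map induced
   by f modulo Γ~ gives a ∈ Γ~(A); no other property of Γ~ is needed. *)

Section GroupFacts.

Variable G : Grp.

Lemma gmul_idem_eq1 (x : G) : gmul x x = x -> x = gone.
Proof.
  intro E.
  transitivity (gmul (gmul (ginv x) x) x).
  - rewrite gmulV, gmul1; reflexivity.
  - rewrite <- gmulA, E, gmulV; reflexivity.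
Qed.

Lemma gmulVr (x : G) : gmul x (ginv x) = gone.
Proof.
  apply gmul_idem_eq1.
  rewrite gmulA, <- (gmulA x (ginv x) x), gmulV, <- gmulA, gmul1.
  reflexivity.
Qed.

Lemma gmulr1 (x : G) : gmul x gone = x.
Proof. rewrite <- (gmulV x), gmulA, gmulVr, gmul1; reflexivity. Qed.

Lemma ginv_unique (x y : G) : gmul y x = gone -> y = ginv x.
Proof.
  intro E.
  rewrite <- (gmulr1 y), <- (gmulVr x), gmulA, E, gmul1; reflexivity.
Qed.

End GroupFacts.

Lemma hom_gone {A B : Grp} {f : A -> B} : is_hom f -> f gone = gone.
Proof. intro hf. apply gmul_idem_eq1. rewrite <- hf, gmul1; reflexivity. Qed.

Lemma hom_ginv {A B : Grp} {f : A -> B} :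
  is_hom f -> forall a, f (ginv a) = ginv (f a).
Proof.
  intros hf a. apply ginv_unique.
  rewrite <- hf, gmulV. now apply hom_gone.
Qed.

Section Stabilization.

Context {Ob : Grp -> Prop} {Mor : forall A B : Grp, (A -> B) -> Prop}.
Hypothesis HC : is_subcategory Ob Mor.
Context {H : forall A B : Grp, (A -> B) -> Prop}.
Hypothesis HH : class_of_maps Ob Mor H.

Lemma class_of_maps_id (A : Grp) : Ob A -> H A A (fun x => x).
Proof.
  intro oA. destruct HC as [_ [Cid _]]. apply (proj1 (proj2 HH)).
  split; [now apply Cid|].
  exists (fun x => x). split; [now apply Cid | split; reflexivity].
Qed.

Lemma class_of_maps_hom {A B : Grp} {f : A -> B} :
  H A B f -> Ob A /\ Ob B /\ is_hom f.
Proof. intro hf. apply (proj1 HC), (proj1 HH), hf. Qed.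

Lemma class_of_maps_comp {A B C : Grp} {f : A -> B} {g : B -> C} :
  H A B f -> H B C g -> H A C (fun x => g (f x)).
Proof. apply (proj1 (proj2 (proj2 HH))). Qed.

Lemma class_of_maps_nudge {A B B' : Grp} {f : A -> B} {f' : A -> B'} :
  H A B f -> H A B' f' ->
  exists (C : Grp) (g : B -> C) (g' : B' -> C),
    Ob C /\ H B C g /\ H B' C g' /\ forall a, g (f a) = g' (f' a).
Proof. apply (proj2 (proj2 (proj2 HH))). Qed.

Context {Gam : forall A : Grp, A -> Prop}.
Hypothesis HG : subgroup_function Ob Gam.
Hypothesis HGinv : H_invariant H Gam.

Lemma stabilization_of_Gam (A : Grp) (a : A) :
  Ob A -> Gam A a -> stabilization H Gam A a.
Proof. intros oA Ga. exists A, (fun x => x). split; [now apply class_of_maps_id | exact Ga]. Qed.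

Lemma stabilization_image {A B : Grp} {f : A -> B} {a : A} :
  H A B f -> stabilization H Gam A a -> stabilization H Gam B (f a).
Proof.
  intros hf [C [k [hk Gk]]].
  destruct (class_of_maps_nudge hf hk) as [D [g [g' [_ [hg [hg' E]]]]]].
  exists D, g. split; [exact hg|].
  rewrite E. exact (HGinv _ _ _ hg' _ Gk).
Qed.

Lemma stabilization_preimage {A B : Grp} {f : A -> B} {a : A} :
  H A B f -> stabilization H Gam B (f a) -> stabilization H Gam A a.
Proof.
  intros hf [C [k [hk Gk]]].
  exists C, (fun x => k (f x)). split; [now apply class_of_maps_comp | exact Gk].
Qed.

Lemma stabilization_mul {A : Grp} (x y : A) :
  stabilization H Gam A x -> stabilization H Gam A y ->
  stabilization H Gam A (gmul x y).
Proof.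
  intros [B [f [hf Gx]]] [B' [f' [hf' Gy]]].
  destruct (class_of_maps_nudge hf hf') as [C [g [g' [oC [hg [hg' E]]]]]].
  exists C, (fun x => g (f x)). split; [now apply class_of_maps_comp|].
  destruct (class_of_maps_hom hf) as [_ [_ homf]].
  destruct (class_of_maps_hom hg) as [_ [_ homg]].
  destruct (HG _ oC) as [[_ [GCmul _]] _].
  rewrite homf, homg.
  apply GCmul; [exact (HGinv _ _ _ hg _ Gx) | rewrite E; exact (HGinv _ _ _ hg' _ Gy)].
Qed.

Lemma stabilization_inv {A : Grp} (x : A) :
  stabilization H Gam A x -> stabilization H Gam A (ginv x).
Proof.
  intros [B [f [hf Gx]]]. exists B, f. split; [exact hf|].
  destruct (class_of_maps_hom hf) as [_ [oB homf]].
  destruct (HG _ oB) as [[_ [_ GBinv]] _].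
  rewrite (hom_ginv homf). exact (GBinv _ Gx).
Qed.

Lemma stabilization_subgroup (A : Grp) :
  Ob A -> is_subgroup (stabilization H Gam A).
Proof.
  intro oA. destruct (HG _ oA) as [[G1 _] _].
  split; [now apply stabilization_of_Gam | split].
  - exact stabilization_mul.
  - exact stabilization_inv.
Qed.

Lemma Gam_normal_in_stabilization (A : Grp) :
  Ob A -> normal_subgroup_of (Gam A) (stabilization H Gam A).
Proof.
  intro oA. destruct (HG _ oA) as [GA GAnormal].
  split; [now apply stabilization_subgroup | split; [exact GA | split]].
  - intros x Gx. now apply stabilization_of_Gam.
  - intros h x _ Gx. now apply GAnormal.
Qed.

Lemma stabilization_induces_mono (A B : Grp) (f : A -> B) :
  H A B f -> induces_mono f (stabilization H Gam A) (stabilization H Gam B).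
Proof.
  intro hf. split; intro a.
  - now apply stabilization_image.
  - now apply stabilization_preimage.
Qed.

Lemma stabilization_minimal (Gt : forall A : Grp, A -> Prop) :
  (forall A, Ob A -> forall a, Gam A a -> Gt A a) ->
  (forall A B f, H A B f -> induces_mono f (Gt A) (Gt B)) ->
  forall A a, stabilization H Gam A a -> Gt A a.
Proof.
  intros GamGt monoGt A a [B [f [hf Gfa]]].
  destruct (class_of_maps_hom hf) as [_ [oB _]].
  apply (proj2 (monoGt _ _ _ hf)). now apply GamGt.
Qed.

End Stabilization.

Theorem theorem2p10 (Ob : Grp -> Prop) (Mor : forall A B : Grp, (A -> B) -> Prop)
  (HC : is_subcategory Ob Mor)
  (H : forall A B : Grp, (A -> B) -> Prop) (HH : class_of_maps Ob Mor H)
  (Gam : forall A : Grp, A -> Prop) (HG : subgroup_function Ob Gam)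
  (HGinv : H_invariant H Gam) :
  (forall A, Ob A -> normal_subgroup_of (Gam A) (stabilization H Gam A)) /\
  (forall A B f, H A B f ->
     induces_mono f (stabilization H Gam A) (stabilization H Gam B)) /\
  (forall Gt : forall A : Grp, A -> Prop,
     subgroup_function Ob Gt -> H_invariant H Gt ->
     (forall A, Ob A -> forall a, Gam A a -> Gt A a) ->
     (forall A B f, H A B f -> induces_mono f (Gt A) (Gt B)) ->
     forall A, Ob A -> forall a, stabilization H Gam A a -> Gt A a).
Proof.
  split; [|split].
  - exact (Gam_normal_in_stabilization HC HH HG HGinv).
  - exact (stabilization_induces_mono HH HGinv).
  - intros Gt _ _ GamGt monoGt A _.
    exact (stabilization_minimal HC HH _ GamGt monoGt A).
Qed.
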